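(* Let $p_1,\dots,p_k$ be mutually orthogonal primitive idempotents in a finite-dimensional formally real Jordan algebra $A$ with unit $u$. Then the restriction of $\exp_u\colon(A,\|\cdot\|_u)\to(A_+^\circ,d_T)$, $x\mapsto e^x$, to $\mathrm{Span}\{p_1,\dots,p_k\}$ is an isometry. Moreover, if $x,w\in\mathrm{Span}\{p_1,\dots,p_k\}$ with $\|w\|_u=1$, then $t\mapsto e^{tw+x}$, $t\in\mathbb{R}$, is a geodesic path in $(A_+^\circ,d_T)$, i.e. $d_T(e^{tw+x},e^{sw+x})=|t-s|$ for all $s,t\in\mathbb{R}$.
   Context: $A$: finite-dimensional real vector space with commutative bilinear product $\bullet$ satisfying $x^2\bullet(x\bullet y)=x\bullet(x^2\bullet y)$, formally real, with unit $u$. $A_+=\{x^2\}$, $A_+^\circ$ its interior, $x\le y$ iff $y-x\in A_+$. Idempotents $p,q$ are orthogonal if $p\bullet q=0$; spectral decomposition $x=\sum_i\lambda_ip_i$ over a Jordan frame, $\sigma(x)=\{\lambda_i\}$, $e^x=\sum_ie^{\lambda_i}p_i$. $\|x\|_u=\max\{|\lambda|:\lambda\in\sigma(x)\}$. For $x\in A$, $y\in A_+^\circ$, $M(x/y)=\inf\{\beta:x\le\beta y\}$; $d_T(x,y)=\max\{\log M(x/y),\log M(y/x)\}$ for $x,y\in A_+^\circ$ (equivalently $d_T(x,y)=\|\log U_{y^{-1/2}}x\|_u$, with $U_zv=2z\bullet(z\bullet v)-z^2\bullet v$). *)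

From HB Require Import structures.
From mathcomp Require Import all_boot all_order all_algebra.
From mathcomp Require Import all_classical all_reals.
From mathcomp Require Import sequences exp.
Set Implicit Arguments. Unset Strict Implicit. Unset Printing Implicit Defensive.
Import Order.TTheory GRing.Theory Num.Theory.
Local Open Scope ring_scope.
Local Open Scope classical_set_scope.

Record FRJA (R : realType) (V : vectType R) := {
  jmul : V -> V -> V;
  jmul_linear : forall (a : R) (x1 x2 y : V),
      jmul (a *: x1 + x2) y = a *: jmul x1 y + jmul x2 y;
  jmulC : forall x y, jmul x y = jmul y x;
  jordan_id : forall x y,
      jmul (jmul x x) (jmul x y) = jmul x (jmul (jmul x x) y);
  formally_real : forall s : seq V,
      \sum_(x <- s) jmul x x = 0 -> all (fun x => x == 0) s;
  junit : V;
  junitP : forall x, jmul junit x = x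
}.
Arguments FRJA : clear implicits.

Section JordanDefs.
Variables (R : realType) (V : vectType R) (A : FRJA R V).

Local Notation "x • y" := (jmul A x y) (at level 40).

Definition jle (x y : V) : Prop := exists z : V, y - x = z • z.

Definition jidempotent (p : V) : Prop := p • p = p.

Definition jorth (p q : V) : Prop := p • q = 0.

Definition jprimitive (p : V) : Prop :=
  [/\ jidempotent p, p <> 0 &
      ~ (exists q1 q2, [/\ jidempotent q1 /\ q1 <> 0, jidempotent q2 /\ q2 <> 0,
                          jorth q1 q2 & p = q1 + q2])].

Definition jordan_frame (r : nat) (c : 'I_r -> V) : Prop :=
  [/\ forall i, jprimitive (c i),
      forall i j, i != j -> jorth (c i) (c j)
    & \sum_i c i = junit A].

Definition spectral_dec (x : V) (r : nat) (c : 'I_r -> V) (lam : 'I_r -> R) :=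
  jordan_frame c /\ x = \sum_i lam i *: c i.

Definition jspectrum (x : V) : set R :=
  [set l | exists r (c : 'I_r -> V) (lam : 'I_r -> R),
             spectral_dec x c lam /\ exists i, lam i = l].

Definition unorm (x : V) : R := sup [set `|l| | l in jspectrum x].

Definition jexp (x : V) : V :=
  xget 0 [set y | exists r (c : 'I_r -> V) (lam : 'I_r -> R),
                    spectral_dec x c lam /\ y = \sum_i expR (lam i) *: c i].

Definition Mxy (x y : V) : R := inf [set b : R | jle x (b *: y)].

Definition dT (x y : V) : R := Num.max (ln (Mxy x y)) (ln (Mxy y x)).

End JordanDefs.

From HB Require Import structures.
From mathcomp Require Import all_boot all_order all_algebra.
From mathcomp Require Import all_classical all_reals sequences exp.
From mathcomp Require Import complex ring lra zify.
Import Order.TTheory GRing.Theory Num.Theory.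
Local Open Scope ring_scope.
Local Open Scope classical_set_scope.
Set Implicit Arguments. Unset Strict Implicit. Unset Printing Implicit Defensive.

(* Powers of an element z of a formally real Jordan algebra associate, so
   P |-> P(z) is a ring morphism on real polynomials.  Formal reality forces
   the minimal annihilating polynomial of z to split into distinct real linear
   factors, and Lagrange interpolation at its roots gives z = sum_i l_i c_i over
   a complete system of orthogonal idempotents; the l_i do not depend on the
   decomposition, so e^z and ||z||_u can be read off any one of them, and
   squares have nonnegative eigenvalues.  The p_i extend to a Jordan frame c
   (add u - sum_i p_i, then split non-primitive members), and for
   x = sum_i a_i c_i and y = sum_i b_i c_i we get e^x <= beta e^y iff
   beta >= e^(a_i - b_i) for all i, whence d_T(e^x, e^y) = max_i |a_i - b_i|
   = ||x - y||_u. *)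

Lemma ord_argmax (R : realDomainType) n (f : 'I_n -> R) : (0 < n)%N ->
  exists j0, forall j, f j <= f j0.
Proof.
case: n f => // n f _; exists [arg max_(i > ord0) f i]%O.
by case: arg_maxP => // j _ fj j'; apply: fj.
Qed.

Lemma poly_interpolation (F : fieldType) (S : seq F) (f : F -> F) :
  exists P : {poly F}, {in S, forall x, P.[x] = f x}.
Proof.
elim: S => [|x S [P hP]]; first by exists 0.
have [xS|xS] := boolP (x \in S).
  by exists P => y; rewrite inE => /predU1P [->|]; apply: hP.
pose N := \prod_(y <- S) ('X - y%:P).
have Nx : N.[x] != 0.
  rewrite horner_prod prodf_seq_neq0; apply/allP => y yS /=.
  by rewrite hornerXsubC subr_eq0; apply: contraNneq xS => ->.
have NS y : y \in S -> N.[y] = 0.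
  by move=> yS; rewrite horner_prod (big_rem y) //= hornerXsubC subrr mul0r.
exists (P + ((f x - P.[x]) / N.[x])%:P * N) => y; rewrite inE.
case/predU1P => [->|yS]; first by rewrite hornerD hornerM hornerC divfK // addrC subrK.
by rewrite hornerD hornerM hornerC (NS y yS) mulr0 addr0 hP.
Qed.

Lemma map_quadratic_complex (R : rcfType) (a b : R) :
  map_poly (real_complex R) (('X - a%:P) ^+ 2 + (b ^+ 2)%:P) =
  ('X - (a +i* b)%C%:P) * ('X - (a -i* b)%C%:P).
Proof.
rewrite rmorphD rmorphXn rmorphB /= map_polyX !map_polyC /= rmorphXn.
have -> : (a +i* b)%C = a%:C%C + 'i%C * b%:C%C by apply/eqP; rewrite eq_complex /=; simpc.
have -> : (a -i* b)%C = a%:C%C - 'i%C * b%:C%C by apply/eqP; rewrite eq_complex /=; simpc.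
have i2 : ('i%C%:P : {poly R[i]}) ^+ 2 = -1 by rewrite -rmorphXn /= sqr_i polyCN.
rewrite !polyCD polyCN !polyCM.
transitivity (('X - (a%:C)%C%:P) ^+ 2 - ('i%C%:P) ^+ 2 * ((b%:C)%C%:P) ^+ 2); last by ring.
by rewrite i2 mulN1r opprK expr2.
Qed.

Lemma rcf_root_or_quadratic_dvd (R : rcfType) (q : {poly R}) : (1 < size q)%N ->
  (exists x, root q x) \/
  (exists a b : R, b != 0 /\ ('X - a%:P) ^+ 2 + (b ^+ 2)%:P %| q).
Proof.
move=> sq; pose f := real_complex R; set qc := map_poly f q.
have : size qc != 1%N by rewrite size_map_poly; case: (size q) sq => [|[]].
case/closed_rootP => w rw.
have [hb|hb] := eqVneq (complex.Im w) 0.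
  left; exists (complex.Re w).
  have ew : w = f (complex.Re w) by case: w rw hb => a b /= _ ->.
  by move: rw; rewrite ew /root horner_map /= => /eqP [->].
right; exists (complex.Re w), (complex.Im w); split => //.
have rw' : root qc w^*%C.
  rewrite -complex_root_conj -map_poly_comp.
  by rewrite (eq_map_poly (g := f)) // => x /=; apply: conjc_real.
have uw : uniq_roots [:: w; w^*%C].
  rewrite uniq_rootsE /= inE andbT; move: hb; clear rw rw'; case: w => a b /= hb.
  apply/eqP => -[] /eqP; rewrite -subr_eq0 opprK -mulr2n mulrn_eq0 /=.
  by rewrite (negbTE hb).
have hall : all (root qc) [:: w; w^*%C] by rewrite /= rw rw'.
have [t ht] := uniq_roots_prod_XsubC hall uw.
rewrite -(dvdp_map f) -/qc ht dvdp_mull // !big_cons big_nil mulr1.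
by case: (w) => a b /=; rewrite map_quadratic_complex.
Qed.

Section Polarization.
Variables (R : numFieldType) (U W : lmodType R) (F : U -> U -> U -> W).
Hypotheses
  (F_linl : forall a a' s b c, F (a + s *: a') b c = F a b c + s *: F a' b c)
  (F_linm : forall a b b' s c, F a (b + s *: b') c = F a b c + s *: F a b' c)
  (F_linr : forall a b c c' s, F a b (c + s *: c') = F a b c + s *: F a b c').

Lemma trilinear_expand x z s :
  F (x + s *: z) (x + s *: z) (x + s *: z) =
  F x x x + s *: (F z x x + F x z x + F x x z) +
  (s ^+ 2) *: (F x z z + F z x z + F z z x) + (s ^+ 3) *: F z z z.
Proof.
rewrite !(F_linl, F_linm, F_linr) !scalerDr !scalerA -!expr2 -!exprSr.
set a := F x x x; set b := F x x z; set c := F x z x; set d := F x z z.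
set e := F z x x; set f := F z x z; set g := F z z x; set h := F z z z.
rewrite -!addrA; congr (_ + _).
rewrite (addrCA (s ^+ 2 *: d) (s *: e)) (addrCA (s *: c) (s *: e)).
by rewrite (addrCA (s *: b) (s *: e)) (addrCA (s *: b) (s *: c)).
Qed.

Lemma trilinear_polar : (forall w, F w w w = 0) ->
  forall x z, F z x x + F x z x + F x x z = 0.
Proof.
move=> F0 x z; have e1 := trilinear_expand x z 1; have e2 := trilinear_expand x z (-1).
rewrite !F0 expr1n !scale1r scaler0 add0r addr0 in e1.
rewrite !F0 sqrrN expr1n !scale1r scaler0 add0r addr0 scaleN1r in e2.
set D1 := F z x x + _ + _ in e1 e2 *; set D2 := F x z z + _ + _ in e1 e2.
clearbody D1 D2.
apply: (@scalerI _ _ 2); first by rewrite pnatr_eq0.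
rewrite scaler0 scaler_nat mulr2n.
have -> : D1 + D1 = (D1 + D2) - (- D1 + D2).
  by rewrite opprD opprK addrACA subrr addr0.
by rewrite -e1 -e2 subr0.
Qed.

End Polarization.

Section JordanAlgebra.
Variables (R : realType) (V : vectType R) (A : FRJA R V).
Local Notation "x • y" := (jmul A x y) (at level 40).
Local Notation u := (junit A).

Lemma jmul0l y : 0 • y = 0.
Proof.
have := jmul_linear A 1 0 0 y; rewrite !scale1r addr0 => h.
by apply: (addrI (0 • y)); rewrite addr0 -h.
Qed.

Lemma jmulDl x1 x2 y : (x1 + x2) • y = x1 • y + x2 • y.
Proof. by have := jmul_linear A 1 x1 x2 y; rewrite !scale1r. Qed.

Lemma jmulZl a x y : (a *: x) • y = a *: (x • y).
Proof. by have := jmul_linear A a x 0 y; rewrite !addr0 jmul0l addr0. Qed.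

Lemma jmulNl x y : (- x) • y = - (x • y).
Proof. by rewrite -scaleN1r jmulZl scaleN1r. Qed.

Lemma jmulBl x1 x2 y : (x1 - x2) • y = x1 • y - x2 • y.
Proof. by rewrite jmulDl jmulNl. Qed.

Lemma jmul0r y : y • 0 = 0.
Proof. by rewrite jmulC jmul0l. Qed.

Lemma jmulDr y x1 x2 : y • (x1 + x2) = y • x1 + y • x2.
Proof. by rewrite !(jmulC A y) jmulDl. Qed.

Lemma jmulZr a y x : y • (a *: x) = a *: (y • x).
Proof. by rewrite !(jmulC A y) jmulZl. Qed.

Lemma jmulNr y x : y • (- x) = - (y • x).
Proof. by rewrite !(jmulC A y) jmulNl. Qed.

Lemma jmulBr y x1 x2 : y • (x1 - x2) = y • x1 - y • x2.
Proof. by rewrite jmulDr jmulNr. Qed.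

Lemma jmulMnr y x n : y • (x *+ n) = (y • x) *+ n.
Proof. by elim: n => [|n IH]; rewrite ?mulr0n ?jmul0r // !mulrS jmulDr IH. Qed.

Lemma jmul1l x : u • x = x. Proof. exact: junitP. Qed.

Lemma jmul1r x : x • u = x. Proof. by rewrite jmulC junitP. Qed.

Lemma jmul_suml I (r : seq I) (P : pred I) (F : I -> V) y :
  (\sum_(i <- r | P i) F i) • y = \sum_(i <- r | P i) F i • y.
Proof. exact: (big_morph (jmul A^~ y) (fun a b => jmulDl a b y) (jmul0l y)). Qed.

Lemma jmul_sumr I (r : seq I) (P : pred I) (F : I -> V) y :
  y • (\sum_(i <- r | P i) F i) = \sum_(i <- r | P i) y • F i.
Proof. exact: (big_morph (jmul A y) (jmulDr y) (jmul0r y)). Qed.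

Lemma unit0_trivial : u = 0 -> forall v : V, v = 0.
Proof. by move=> u0 v; rewrite -(jmul1l v) u0 jmul0l. Qed.

Lemma jsqr_eq0 y : y • y = 0 -> y = 0.
Proof.
move=> h; have := @formally_real _ _ A [:: y].
by rewrite big_cons big_nil addr0 h => /(_ erefl) /andP [/eqP].
Qed.

Lemma jsqrD_eq0 y z : y • y + z • z = 0 -> y = 0 /\ z = 0.
Proof.
move=> h; have := @formally_real _ _ A [:: y; z].
by rewrite !big_cons big_nil addr0 h => /(_ erefl) /and3P [/eqP ? /eqP ?].
Qed.

(* [L_(a • b), L_c] y, which vanishes for a = b = c by the Jordan identity. *)
Definition jordan_form y a b c := (a • b) • (c • y) - c • ((a • b) • y).

Lemma jordan_form_polar y x z :
  jordan_form y z x x + jordan_form y x z x + jordan_form y x x z = 0.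
Proof.
apply: (@trilinear_polar _ _ _ (jordan_form y)) => [a a' s b c|a b b' s c|a b c c' s|w].
- by rewrite /jordan_form !(jmulDl, jmulZl, jmulDr, jmulZr) scalerBr opprD addrACA.
- by rewrite /jordan_form !(jmulDl, jmulZl, jmulDr, jmulZr) scalerBr opprD addrACA.
- by rewrite /jordan_form !(jmulDl, jmulZl, jmulDr, jmulZr) scalerBr opprD addrACA.
- by rewrite /jordan_form jordan_id subrr.
Qed.

Lemma jordan_linearized x y w : w • ((x • x) • y) =
  ((x • w) • (x • y) - x • ((x • w) • y)) *+ 2 + (x • x) • (w • y).
Proof.
have := jordan_form_polar y x w; rewrite /jordan_form (jmulC A w x) -mulr2n.
by move=> /eqP; rewrite addrA subr_eq0 => /eqP <-.
Qed.

Lemma peirce_mul10 e a b : e • e = e -> e • a = a -> e • b = 0 -> a • b = 0.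
Proof.
move=> ee ea eb.
have h1 := jordan_form_polar b e a.
rewrite /jordan_form (jmulC A a e) ea eb !jmul0r ee eb jmul0r in h1.
rewrite !sub0r subr0 addrNK in h1.
have h2 := jordan_form_polar a e b.
rewrite /jordan_form (jmulC A b e) eb !jmul0l !jmul0r ee ea in h2.
rewrite !subrr !add0r (jmulC A b a) in h2.
move/eqP: h2; rewrite subr_eq0 => /eqP <-.
by apply/eqP; rewrite -oppr_eq0 h1.
Qed.

Definition jpow z n := iter n (jmul A z) u.

Lemma jpowS z n : jpow z n.+1 = z • jpow z n. Proof. by []. Qed.

Lemma jpow1 z : jpow z 1 = z. Proof. exact: jmul1r. Qed.

Definition operator_commute z Y :=
  (forall v, z • (v • Y) = (z • v) • Y) /\
  (forall v, (z • z) • (v • Y) = ((z • z) • v) • Y).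

Lemma operator_commute_step z Y :
  operator_commute z Y -> operator_commute z (z • Y) ->
  operator_commute z (z • (z • Y)).
Proof.
move=> [H1 H2] [K1 K2].
have zzY : z • (z • Y) = (z • z) • Y by rewrite -H1 (jmulC A z Y).
set Y1 := z • Y in K1 K2 *.
have P v : v • (z • Y1) =
    ((z • v) • Y1 - z • ((z • v) • Y)) *+ 2 + (z • z) • (v • Y).
  by rewrite /Y1 zzY jordan_linearized.
split => v; rewrite !P jmulDr jmulMnr jmulBr.
- by rewrite K1 H1 -jordan_id [z • (v • Y)]H1.
- rewrite K2 jordan_id [(z • z) • (z • ((z • v) • Y))]jordan_id.
  by rewrite [(z • z) • ((z • v) • Y)]H2 jordan_id [(z • z) • (v • Y)]H2.
Qed.

Lemma operator_commute_jpow z n : operator_commute z (jpow z n).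
Proof.
suff : operator_commute z (jpow z n) /\ operator_commute z (jpow z n.+1) by case.
elim: n => [|n [IH1 IH2]]; last by split => //; apply: operator_commute_step.
rewrite jpow1; split; split => v /=; rewrite ?jmul1r //.
- by rewrite (jmulC A v z) (jmulC A (z • v) z).
- by rewrite (jmulC A v z) (jmulC A ((z • z) • v) z) jordan_id.
Qed.

Definition jeval z (P : {poly R}) : V := \sum_(i < size P) P`_i *: jpow z i.

Lemma jeval_wide z (P : {poly R}) n : (size P <= n)%N ->
  jeval z P = \sum_(i < n) P`_i *: jpow z i.
Proof.
move=> hn; rewrite /jeval (big_ord_widen n (fun i => P`_i *: jpow z i) hn).
rewrite big_mkcond /=; apply: eq_bigr => i _; case: ifP => // /negbT.
by rewrite -leqNgt => h; rewrite nth_default // scale0r.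
Qed.

Lemma jevalD z (P Q : {poly R}) : jeval z (P + Q) = jeval z P + jeval z Q.
Proof.
set n := maxn (size P) (size Q).
rewrite (@jeval_wide z (P + Q) n) ?(@jeval_wide z P n) ?(@jeval_wide z Q n).
- by rewrite -big_split /=; apply: eq_bigr => i _; rewrite coefD scalerDl.
- exact: leq_maxr.
- exact: leq_maxl.
- exact: leq_trans (size_polyD _ _) _.
Qed.

Lemma jevalZ z a (P : {poly R}) : jeval z (a *: P) = a *: jeval z P.
Proof.
rewrite (@jeval_wide z (a *: P) (size P)) ?size_scale_leq // /jeval scaler_sumr.
by apply: eq_bigr => i _; rewrite coefZ scalerA.
Qed.

Lemma jeval0 z : jeval z 0 = 0.
Proof. by rewrite /jeval size_poly0 big_ord0. Qed.

Lemma jevalB z (P Q : {poly R}) : jeval z (P - Q) = jeval z P - jeval z Q.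
Proof. by rewrite jevalD -scaleN1r jevalZ scaleN1r. Qed.

Lemma jeval_sum z I (r : seq I) (P : pred I) (F : I -> {poly R}) :
  jeval z (\sum_(i <- r | P i) F i) = \sum_(i <- r | P i) jeval z (F i).
Proof. exact: (big_morph (jeval z) (jevalD z) (jeval0 z)). Qed.

Lemma jevalC z c : jeval z c%:P = c *: u.
Proof. by rewrite (@jeval_wide z _ 1) ?size_polyC ?leq_b1 // big_ord1 coefC. Qed.

Lemma jevalMX z (P : {poly R}) : jeval z (P * 'X) = z • jeval z P.
Proof.
have [->|nz] := eqVneq P 0; first by rewrite mul0r jeval0 jmul0r.
rewrite /jeval size_mulX // big_ord_recl coefMX eqxx scale0r add0r jmul_sumr.
by apply: eq_bigr => i _; rewrite coefMX /= jmulZr.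
Qed.

Lemma jeval_operator_commute z (P : {poly R}) w :
  jeval z P • (z • w) = z • (jeval z P • w).
Proof.
rewrite /jeval !jmul_suml jmul_sumr; apply: eq_bigr => i _.
rewrite !jmulZl jmulZr (jmulC A (jpow z i) (z • w)).
by rewrite -(operator_commute_jpow z i).1 (jmulC A w).
Qed.

Lemma jevalM z (P Q : {poly R}) : jeval z (P * Q) = jeval z P • jeval z Q.
Proof.
elim/poly_ind: Q => [|Q c IH]; first by rewrite mulr0 jeval0 jmul0r.
rewrite mulrDr mulrA jevalD jevalMX IH jevalD jevalMX jmulDr.
by rewrite jeval_operator_commute mulrC mul_polyC jevalZ jevalC jmulZr jmul1r.
Qed.

Lemma jeval1 z : jeval z 1 = u.
Proof. by rewrite -polyC1 jevalC scale1r. Qed.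

Lemma jevalX z : jeval z 'X = z.
Proof. by rewrite -[X in jeval _ X]mul1r jevalMX jeval1 jmul1r. Qed.

(* Unlike in a Jordan frame, the idempotents may be zero or non-primitive. *)
Definition idem_system r (c : 'I_r -> V) := [/\ forall i, c i • c i = c i,
  forall i j, i != j -> c i • c j = 0 & \sum_i c i = u].

Section IdemSystem.
Variables (r : nat) (c : 'I_r -> V).
Hypothesis cS : idem_system c.

Lemma isys_mul_idem (a : 'I_r -> R) j : (\sum_i a i *: c i) • c j = a j *: c j.
Proof.
case: cS => idem orth _; rewrite jmul_suml (bigD1 j) //= big1 ?addr0.
  by rewrite jmulZl idem.
by move=> i /negbTE ij; rewrite jmulZl orth ?scaler0 // ij.
Qed.

Lemma isys_mul (a b : 'I_r -> R) :
  (\sum_i a i *: c i) • (\sum_i b i *: c i) = \sum_i (a i * b i) *: c i.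
Proof.
rewrite jmul_sumr; apply: eq_bigr => i _.
by rewrite jmulZr isys_mul_idem scalerA mulrC.
Qed.

Lemma isys_jpow (a : 'I_r -> R) n :
  jpow (\sum_i a i *: c i) n = \sum_i (a i ^+ n) *: c i.
Proof.
elim: n => [|n IH].
  by case: cS => _ _ /= <-; apply: eq_bigr => i _; rewrite expr0 scale1r.
by rewrite jpowS IH isys_mul; apply: eq_bigr => i _; rewrite exprS.
Qed.

Lemma isys_jeval (a : 'I_r -> R) P :
  jeval (\sum_i a i *: c i) P = \sum_i P.[a i] *: c i.
Proof.
rewrite /jeval; under eq_bigr do rewrite isys_jpow scaler_sumr.
rewrite exchange_big /=; apply: eq_bigr => i _.
by rewrite horner_coef scaler_suml; apply: eq_bigr => k _; rewrite scalerA.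
Qed.

End IdemSystem.
End JordanAlgebra.

Section Spectral.
Variables (R : realType) (V : vectType R) (A : FRJA R V).
Local Notation "x • y" := (jmul A x y) (at level 40).
Local Notation jeval := (jeval A).

Lemma jeval_annihilator z : exists2 P : {poly R}, P != 0 & jeval z P = 0.
Proof.
set d := \dim {:V}; set X := [tuple jpow A z i | i < d.+1].
have /freeP : ~~ free X.
  apply/negP; rewrite /free size_tuple => /eqP dimX.
  by have := dimvS (subvf <<X>>%VS); rewrite dimX ltnn.
move=> /boolp.existsNP [k] /boolp.not_implyP [hk] /boolp.existsNP [i0 ki0].
exists (\poly_(i < d.+1) k (inord i)).
  apply: contra_notN ki0 => /eqP /(congr1 (fun P : {poly R} => P`_i0)).
  by rewrite coef_poly ltn_ord inord_val coef0.
rewrite (@jeval_wide _ _ A z _ d.+1) ?size_poly // -[RHS]hk.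
by apply: eq_bigr => i _; rewrite coef_poly ltn_ord inord_val -tnth_nth tnth_mktuple.
Qed.

Definition min_annih z m := [/\ m != 0, jeval z m = 0 &
  forall Q, Q != 0 -> jeval z Q = 0 -> (size m <= size Q)%N].

Lemma exists_min_annih z : exists m, min_annih z m.
Proof.
have [P nzP hP] := jeval_annihilator z.
have ex : exists n, `[< exists2 Q : {poly R}, (Q != 0) && (jeval z Q == 0) & size Q = n >].
  by exists (size P); apply/asboolP; exists P; rewrite ?nzP ?hP ?eqxx.
case: (ex_minnP ex) => n /asboolP [m /andP [nzm /eqP hm] <-] min_n.
exists m; split => // Q nzQ hQ; apply: min_n; apply/asboolP; exists Q => //.
by rewrite nzQ hQ eqxx.
Qed.

Section MinAnnih.
Variables (z : V) (m : {poly R}).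
Hypothesis mm : min_annih z m.

(* Formal reality forbids a factor (X - a)^2 + b^2 with b != 0: writing
   m = ((X - a)^2 + b^2) r, the elements ((z - a) r(z))^2 + (b r(z))^2 = (m r)(z)
   vanish, so r(z) = 0 with r of smaller degree than m. *)
Lemma min_annih_dvd_root q : q %| m -> (1 < size q)%N -> exists x, root q x.
Proof.
case: mm => nzm hm m_min dq sq.
case: (rcf_root_or_quadratic_dvd sq) => // -[a [b [nzb dQ]]]; exfalso.
set Q := _ + _ in dQ.
have /dvdpP [r mE] := dvdp_trans dQ dq.
have nzr : r != 0 by apply: contraNneq nzm => r0; rewrite mE r0 mul0r.
have sQ : size Q = 3%N.
  rewrite /Q size_polyDl size_exp_XsubC //.
  exact: leq_ltn_trans (size_polyC_leq1 _) _.
have nzQ : Q != 0 by rewrite -size_poly_eq0 sQ.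
have lt_rm : (size r < size m)%N.
  by rewrite mE size_mul // sQ addnS /= addn2 ltnS leqnSn.
have sum_sq0 : jeval z (('X - a%:P) * r) • jeval z (('X - a%:P) * r) +
               jeval z (b%:P * r) • jeval z (b%:P * r) = 0.
  rewrite -!jevalM -jevalD.
  have -> : ('X - a%:P) * r * (('X - a%:P) * r) + b%:P * r * (b%:P * r) = m * r.
    by rewrite mE /Q rmorphXn /=; ring.
  by rewrite jevalM hm jmul0l.
have /eqP := (jsqrD_eq0 sum_sq0).2.
rewrite mul_polyC jevalZ scaler_eq0 (negbTE nzb) /= => /eqP rz.
by have := m_min r nzr rz; rewrite leqNgt lt_rm.
Qed.

Lemma min_annih_sqfree x : ~~ (('X - x%:P) ^+ 2 %| m).
Proof.
case: mm => nzm hm m_min; apply/negP => /dvdpP [r mE].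
have nzr : r != 0 by apply: contraNneq nzm => r0; rewrite mE r0 mul0r.
have nzrx : r * ('X - x%:P) != 0 by rewrite mulf_neq0 ?polyXsubC_eq0.
have : jeval z (r * ('X - x%:P)) = 0.
  apply: (@jsqr_eq0 _ _ A); rewrite -jevalM.
  have -> : r * ('X - x%:P) * (r * ('X - x%:P)) = m * r by rewrite mE; ring.
  by rewrite jevalM hm jmul0l.
move=> /(m_min _ nzrx); rewrite mE !size_mul ?expf_neq0 ?polyXsubC_eq0 //.
by rewrite size_XsubC /= !addnS /= ltnn.
Qed.

Lemma min_annih_dvd_split q : q %| m -> q != 0 ->
  exists s c, [/\ uniq s, c != 0 & q = c *: \prod_(x <- s) ('X - x%:P)].
Proof.
elim: {q}(size q) {-2}q (leqnn (size q)) => [|n IH] q sq dq nzq.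
  by move: nzq; rewrite -size_poly_eq0 -leqn0 sq.
have [sq1|sq1] := leqP (size q) 1.
  have /size_poly1P [c nzc ->] : size q == 1%N by rewrite eqn_leq sq1 lt0n size_poly_eq0.
  by exists [::], c; rewrite big_nil -alg_polyC.
have [x /factor_theorem [q' qE]] := min_annih_dvd_root dq sq1.
have nzq' : q' != 0 by apply: contraNneq nzq => q0; rewrite qE q0 mul0r.
have dq' : q' %| m by apply: dvdp_trans dq; rewrite qE dvdp_mulIl.
have sq' : (size q' <= n)%N.
  by rewrite -ltnS; apply: leq_trans sq; rewrite qE size_mul ?polyXsubC_eq0 // size_XsubC addn2.
have [s [c [us nzc q'E]]] := IH q' sq' dq' nzq'.
have xs : x \notin s.
  apply: contraNN (min_annih_sqfree x) => xs; apply: dvdp_trans dq.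
  rewrite qE q'E -scalerAl expr2 dvdpZr // dvdp_mul //.
  by rewrite (big_rem x) //= dvdp_mulIl.
exists (x :: s), c; split; rewrite /= ?xs //.
by rewrite qE q'E big_cons -scalerAl mulrC.
Qed.

Lemma min_annih_split :
  exists2 s, uniq s & jeval z (\prod_(x <- s) ('X - x%:P)) = 0.
Proof.
case: (mm) => nzm hm _.
have [s [c [us nzc mE]]] := min_annih_dvd_split (dvdpp m) nzm.
exists s => //; move: hm; rewrite mE jevalZ => /eqP.
by rewrite scaler_eq0 (negbTE nzc) => /eqP.
Qed.

End MinAnnih.

Lemma jeval_eq_on_roots z s (P Q : {poly R}) : uniq s ->
  jeval z (\prod_(x <- s) ('X - x%:P)) = 0 ->
  {in s, forall x, P.[x] = Q.[x]} -> jeval z P = jeval z Q.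
Proof.
move=> us hs PQ; apply/eqP; rewrite -subr_eq0 -jevalB; apply/eqP.
have roots : all (root (P - Q)) s.
  by apply/allP => x xs; rewrite /root hornerD hornerN PQ // subrr.
have [t ->] := uniq_roots_prod_XsubC roots (etrans (uniq_rootsE s) us).
by rewrite jevalM hs jmul0r.
Qed.

(* The spectral projections of z are Lagrange polynomials in z at the
   (simple, real) roots of its minimal annihilating polynomial. *)
Theorem spectral_decomposition z : exists r (c : 'I_r -> V) (lam : 'I_r -> R),
  idem_system A c /\ z = \sum_i lam i *: c i.
Proof.
have [m mm] := exists_min_annih z; have [s us hs] := min_annih_split mm.
pose L (k : 'I_(size s)) :=
  sval (boolp.cid (poly_interpolation s (fun x => (x == s`_k)%:R))).
have L_nth k (i : 'I_(size s)) : (L k).[s`_i] = (i == k)%:R.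
  by rewrite /L; case: boolp.cid => Pk /= PE; rewrite PE ?mem_nth // nth_uniq.
have jevalE P Q : (forall i : 'I_(size s), P.[s`_i] = Q.[s`_i]) ->
    jeval z P = jeval z Q.
  move=> PQ; apply: jeval_eq_on_roots us hs _ => x xs.
  by rewrite -(nth_index 0 xs); apply: (PQ (Ordinal _)); rewrite index_mem.
have sum_ind i (F : 'I_(size s) -> R) : \sum_k (i == k)%:R * F k = F i.
  rewrite (bigD1 i) //= eqxx mul1r big1 ?addr0 // => k /negbTE ki.
  by rewrite eq_sym ki mul0r.
exists (size s), (fun k => jeval z (L k)), (fun i => s`_i); split; first split.
- move=> k; rewrite -jevalM; apply: jevalE => i; rewrite hornerM L_nth.
  by case: (i == k); rewrite ?mulr1 ?mulr0.
- move=> k l kl; rewrite -jevalM -(jeval0 A z); apply: jevalE => i.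
  rewrite hornerM !L_nth horner0; have [->|] := eqVneq i k; last by rewrite mul0r.
  by rewrite (negbTE kl) mulr0.
- rewrite -jeval_sum -(jeval1 A z); apply: jevalE => i; rewrite horner_sum hornerC.
  by under eq_bigr do rewrite L_nth -[_%:R]mulr1; rewrite sum_ind.
- rewrite -[LHS](jevalX A z); under eq_bigr do rewrite -jevalZ.
  rewrite -jeval_sum; apply: jevalE => i; rewrite horner_sum hornerX.
  by under eq_bigr do rewrite hornerZ L_nth mulrC; rewrite sum_ind.
Qed.

Section TwoSystems.
Variables (r r' : nat) (c : 'I_r -> V) (d : 'I_r' -> V).
Hypotheses (cS : idem_system A c) (dS : idem_system A d).

Lemma isys_value_mem (a : 'I_r -> R) (b : 'I_r' -> R) l : d l != 0 ->
  \sum_i a i *: c i = \sum_i b i *: d i -> exists i, b l = a i.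
Proof.
move=> nzd ab; pose P := \prod_i ('X - (a i)%:P).
have : jeval (\sum_i a i *: c i) P = 0.
  rewrite isys_jeval // big1 // => i _.
  by rewrite horner_prod (bigD1 i) //= hornerXsubC subrr mul0r scale0r.
rewrite ab isys_jeval // => /(congr1 (jmul A ^~ (d l))).
rewrite isys_mul_idem // jmul0l => /eqP; rewrite scaler_eq0 (negbTE nzd) orbF.
rewrite horner_prod prodf_seq_eq0 => /hasP [i _ /=].
by rewrite hornerXsubC subr_eq0 => /eqP ->; exists i.
Qed.

Lemma isys_fun_eq (a : 'I_r -> R) (b : 'I_r' -> R) (f : R -> R) :
  \sum_i a i *: c i = \sum_i b i *: d i ->
  \sum_i f (a i) *: c i = \sum_i f (b i) *: d i.
Proof.
move=> ab; have [P Pf] := poly_interpolation ([seq a i | i <- enum 'I_r] ++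
                                              [seq b i | i <- enum 'I_r']) f.
transitivity (jeval (\sum_i a i *: c i) P).
  rewrite isys_jeval //; apply: eq_bigr => i _; rewrite Pf //.
  by rewrite mem_cat map_f ?mem_enum.
rewrite ab isys_jeval //; apply: eq_bigr => i _; rewrite Pf //.
by rewrite mem_cat orbC map_f ?mem_enum.
Qed.

End TwoSystems.

Lemma isys_sqr_ge0 r (c : 'I_r -> V) (g : 'I_r -> R) y j :
  idem_system A c -> c j != 0 -> y • y = \sum_i g i *: c i -> 0 <= g j.
Proof.
move=> cS nzc yyE; have [r' [d [lam [dS yE]]]] := spectral_decomposition y.
have yy : \sum_i (lam i ^+ 2) *: d i = \sum_i g i *: c i.
  by rewrite -yyE yE isys_mul //; apply: eq_bigr => i _; rewrite expr2.
by have [i ->] := isys_value_mem dS cS nzc yy; apply: sqr_ge0.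
Qed.

End Spectral.

Section UnitPartition.
Variables (R : realType) (V : vectType R) (A : FRJA R V).
Local Notation "x • y" := (jmul A x y) (at level 40).
Local Notation u := (junit A).

Definition unit_partition (F : seq V) := [/\ uniq F,
  {in F, forall e, e • e = e /\ e != 0},
  {in F &, forall a b, a != b -> a • b = 0} & \sum_(e <- F) e = u].

Lemma unit_partition_size F : unit_partition F -> (size F <= \dim {:V})%N.
Proof.
case=> uF idF orthF _.
suff /eqP <- : free (in_tuple F) by apply: dimvS; apply: subvf.
apply/freeP => k sum0 i; move: sum0 => /(congr1 (jmul A^~ F`_i)).
rewrite jmul_suml jmul0l (bigD1 i) //= big1 ?addr0; last first.
  move=> j ji; rewrite jmulZl orthF ?scaler0 ?mem_nth //.
  by rewrite nth_uniq // (inj_eq val_inj).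
have [ii nz] := idF _ (mem_nth 0 (ltn_ord i)).
by rewrite jmulZl ii => /eqP; rewrite scaler_eq0 (negbTE nz) orbF => /eqP.
Qed.

Lemma unit_partition_split F g q1 q2 : unit_partition F -> g \in F ->
  q1 • q1 = q1 -> q1 != 0 -> q2 • q2 = q2 -> q2 != 0 -> q1 • q2 = 0 ->
  g = q1 + q2 -> unit_partition [:: q1, q2 & rem g F].
Proof.
case=> uF idF orthF sumF gF q1q1 nz1 q2q2 nz2 q12 gE.
have [gg _] := idF g gF.
have remF f : f \in rem g F -> f \in F /\ f != g.
  by rewrite (mem_rem_uniq _ uF) inE => /andP [].
have q_rem q f : g • q = q -> f \in rem g F -> q • f = 0.
  move=> gq /remF [fF fg]; apply: (peirce_mul10 gg gq).
  by rewrite orthF // eq_sym.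
have [q1_rem q2_rem] : {in rem g F, forall f, q1 • f = 0} /\
    {in rem g F, forall f, q2 • f = 0}.
  split=> f; apply: q_rem.
  - by rewrite gE jmulDl q1q1 (jmulC A q2) q12 addr0.
  - by rewrite gE jmulDl q2q2 q12 add0r.
have notin_rem q : q • q = q -> q != 0 -> {in rem g F, forall f, q • f = 0} ->
    q \notin rem g F.
  by move=> qq nzq qrem; apply: contra nzq => /qrem; rewrite qq => ->.
have q1q2 : q1 != q2 by apply: contra_neq nz1 => e; rewrite -q1q1 {2}e q12.
split.
- by rewrite /= !inE negb_or q1q2 !notin_rem // rem_uniq.
- by move=> e; rewrite !inE => /or3P [/eqP->|/eqP->|/remF [/idF]].
- move=> a b; rewrite !inE => /or3P [/eqP->|/eqP->|aF] /or3P [/eqP->|/eqP->|bF];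
    rewrite ?eqxx // => ab.
  + exact: q1_rem.
  + by rewrite jmulC.
  + exact: q2_rem.
  + by rewrite jmulC q1_rem.
  + by rewrite jmulC q2_rem.
  + by apply: orthF; [exact: (remF _ aF).1 | exact: (remF _ bF).1 |].
- by rewrite !big_cons addrA -gE -sumF (perm_big _ (perm_to_rem gF)) big_cons.
Qed.

Lemma unit_partition_refine_step F : unit_partition F ->
  ~ {in F, forall e, jprimitive A e} ->
  exists2 F1, unit_partition F1 & size F1 = (size F).+1 /\
              {in F, forall e, jprimitive A e -> e \in F1}.
Proof.
move=> PF /boolp.existsNP [g /boolp.not_implyP [gF not_prim]].
have [uF idF _ _] := PF; have [gg nzg] := idF g gF.
have [q1 [q2 [[q1q1 nz1] [q2q2 nz2] q12 gE]]] : exists q1 q2,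
    [/\ jidempotent A q1 /\ q1 <> 0, jidempotent A q2 /\ q2 <> 0,
        jorth A q1 q2 & g = q1 + q2].
  by apply: boolp.contrapT => nsplit; apply: not_prim; split => //; apply/eqP.
exists [:: q1, q2 & rem g F].
  by apply: unit_partition_split => //; apply/eqP.
split; first by rewrite /= size_rem //; case: (F) gF.
move=> e eF prim_e; rewrite !inE (mem_rem_uniq _ uF) inE eF andbT.
by apply/or3P/Or33; apply: contraPneq not_prim => <-.
Qed.

Lemma unit_partition_refine F : unit_partition F ->
  exists F', [/\ unit_partition F', {in F', forall e, jprimitive A e} &
                 {in F, forall e, jprimitive A e -> e \in F'}].
Proof.
move: {2}(\dim {:V} - size F)%N (leqnn (\dim {:V} - size F)) => n.
elim: n F => [|n IH] F le_n PF;
  have [prim|not_prim] := boolp.pselect {in F, forall e, jprimitive A e};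
  try by (exists F; split => // e eF _).
all: have [F1 PF1 [sF1 FF1]] := unit_partition_refine_step PF not_prim.
all: have le_F1 := unit_partition_size PF1.
  by exfalso; lia.
have [|F' [PF' prim' F1F']] := IH F1 _ PF1; first by lia.
by exists F'; split => // e eF prim_e; apply/F1F'/prim_e/FF1.
Qed.

Lemma unit_partition_complete k (p : 'I_k -> V) :
  (forall i, p i • p i = p i /\ p i != 0) ->
  (forall i j, i != j -> p i • p j = 0) ->
  exists2 F, unit_partition F & forall i, p i \in F.
Proof.
move=> idp orthp.
set P := [seq p i | i <- enum 'I_k]; set q := u - \sum_(e <- P) e.
have memP e : e \in P -> exists i, e = p i by case/mapP => i _ ->; exists i.
have pP i : p i \in P by rewrite map_f ?mem_enum.
have p_sum i : p i • \sum_(e <- P) e = p i.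
  rewrite big_map big_enum /= jmul_sumr (bigD1 i) //= big1 ?addr0.
    by case: (idp i).
  by move=> j ji; apply: orthp; rewrite eq_sym.
have q_p i : q • p i = 0 by rewrite jmulBl jmul1l jmulC p_sum subrr.
have qq : q • q = q.
  rewrite {1}/q jmulBl jmul1l {2}/q jmul_suml.
  by rewrite big_map big_enum /= (eq_bigr _ (fun i _ => jmulC A _ _)) big1 ?subr0.
have orthP : {in P &, forall a b, a != b -> a • b = 0}.
  by move=> a b /memP [i ->] /memP [j ->] pij; apply: orthp; apply: contra_neq pij => ->.
have uP : uniq P.
  rewrite map_inj_uniq ?enum_uniq // => i j pij; apply/eqP; apply: contraT => ij.
  by have [pp /eqP []] := idp i; rewrite -{1}pp {2}pij orthp.
have [q0|nzq] := eqVneq q 0.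
  exists P => //; split => //; first by move=> e /memP [i ->].
  by move/eqP: q0; rewrite subr_eq0 => /eqP.
have qP : q \notin P.
  by apply/negP => /memP [i qi]; move: (q_p i); rewrite -qi qq; apply/eqP.
exists (q :: P); last by move=> i; rewrite inE pP orbT.
split.
- by rewrite /= qP.
- by move=> e; rewrite inE => /predU1P [->|/memP [i ->]].
- move=> a b; rewrite !inE => /predU1P [->|aP] /predU1P [->|bP]; rewrite ?eqxx // => ab.
  + by have [i ->] := memP _ bP.
  + by have [i ->] := memP _ aP; rewrite jmulC.
  + exact: orthP.
- by rewrite big_cons subrK.
Qed.

Lemma jordan_frame_extend k (p : 'I_k -> V) :
  (forall i, jprimitive A (p i)) -> (forall i j, i != j -> jorth A (p i) (p j)) ->
  exists r (c : 'I_r -> V), jordan_frame A c /\ forall i, exists j, c j = p i.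
Proof.
move=> prim orth.
have idp i : p i • p i = p i /\ p i != 0 by case: (prim i) => ? /eqP.
have [F PF pF] := unit_partition_complete idp orth.
have [F' [[uF' _ orthF' sumF'] primF' FF']] := unit_partition_refine PF.
exists (size F'), (fun j => F'`_j); split.
  split => [i|i j ij|]; first exact/primF'/mem_nth.
    by apply: orthF'; rewrite ?mem_nth // nth_uniq.
  by rewrite -sumF' (big_nth 0) big_mkord.
move=> i; have /(nthP 0) [j lt_j <-] := FF' _ (pF i) (prim i).
by exists (Ordinal lt_j).
Qed.

End UnitPartition.

Lemma frame_idem_system (R : realType) (V : vectType R) (A : FRJA R V) r
    (c : 'I_r -> V) : jordan_frame A c -> idem_system A c.
Proof. by case=> prim orth sum; split => // i; case: (prim i). Qed.

Lemma frame_neq0 (R : realType) (V : vectType R) (A : FRJA R V) r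
    (c : 'I_r -> V) i : jordan_frame A c -> c i != 0.
Proof. by case=> prim _ _; case: (prim i) => _ /eqP. Qed.

Lemma frame_size_gt0 (R : realType) (V : vectType R) (A : FRJA R V) r
    (c : 'I_r -> V) : jordan_frame A c -> junit A != 0 -> (0 < r)%N.
Proof. by case: r c => // c [_ _ <-]; rewrite big_ord0 eqxx. Qed.

Section Frame.
Variables (R : realType) (V : vectType R) (A : FRJA R V).
Variables (r : nat) (c : 'I_r -> V).
Hypothesis cF : jordan_frame A c.

Let cS := frame_idem_system cF.

Lemma jexp_frame a : jexp A (\sum_i a i *: c i) = \sum_i expR (a i) *: c i.
Proof.
rewrite /jexp; set E := (X in xget _ X).
have /(xgetPex 0) : exists y, E y by exists (\sum_i expR (a i) *: c i), r, c, a.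
case=> r' [d [b [[dF ab] ->]]].
exact: (isys_fun_eq (frame_idem_system dF) cS expR (esym ab)).
Qed.

Lemma unorm_frame a j0 : (forall j, `|a j| <= `|a j0|) ->
  unorm A (\sum_i a i *: c i) = `|a j0|.
Proof.
move=> a_max; rewrite /unorm; set E := (X in sup X).
have Ej0 : E `|a j0| by exists (a j0) => //; exists r, c, a; split => //; exists j0.
have ub : ubound E `|a j0|.
  move=> _ [l [r' [d [b [[dF ab] [i <-]]]]] <-].
  have [j ->] := isys_value_mem cS (frame_idem_system dF) (frame_neq0 i dF) ab.
  exact: a_max.
apply/le_anti/andP; split; first by apply: ge_sup => //; exists `|a j0|.
by apply: ub_le_sup Ej0; exists `|a j0|.
Qed.

Lemma Mxy_frame a b j0 : (forall j, a j - b j <= a j0 - b j0) ->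
  Mxy A (\sum_i expR (a i) *: c i) (\sum_i expR (b i) *: c i) = expR (a j0 - b j0).
Proof.
move=> ab_max; rewrite /Mxy.
suff -> : [set β : R | jle A (\sum_i expR (a i) *: c i)
                              (β *: \sum_i expR (b i) *: c i)] =
          `[expR (a j0 - b j0), +oo[%classic by rewrite inf_itv // bnd_simp.
have gE β : β *: (\sum_i expR (b i) *: c i) - \sum_i expR (a i) *: c i =
    \sum_i (β * expR (b i) - expR (a i)) *: c i.
  by rewrite scaler_sumr -sumrB; apply: eq_bigr => i _; rewrite scalerA scalerBl.
apply/seteqP; split => β /=; rewrite in_itv /= andbT.
- case=> y; rewrite gE => /esym yy.
  have := isys_sqr_ge0 cS (frame_neq0 j0 cF) yy.
  by rewrite subr_ge0 expRB ler_pdivrMr ?expR_gt0.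
- move=> le_β.
  have g_ge0 i : 0 <= β * expR (b i) - expR (a i).
    rewrite subr_ge0 (le_trans _ (ler_wpM2r (ltW (expR_gt0 (b i))) le_β)) //.
    by rewrite -expRD ler_expR; have := ab_max i; lra.
  exists (\sum_i Num.sqrt (β * expR (b i) - expR (a i)) *: c i).
  by rewrite gE isys_mul //; apply: eq_bigr => i _; rewrite -expr2 sqr_sqrtr.
Qed.

Lemma dT_jexp_frame a b : (0 < r)%N ->
  dT A (jexp A (\sum_i a i *: c i)) (jexp A (\sum_i b i *: c i)) =
  unorm A (\sum_i a i *: c i - \sum_i b i *: c i).
Proof.
move=> r_gt0; rewrite !jexp_frame.
have -> : \sum_i a i *: c i - \sum_i b i *: c i = \sum_i (a i - b i) *: c i.
  by rewrite -sumrB; apply: eq_bigr => i _; rewrite scalerBl.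
have [j1 h1] := ord_argmax (fun j => a j - b j) r_gt0.
have [j2 h2] := ord_argmax (fun j => b j - a j) r_gt0.
have [j3 h3] := ord_argmax (fun j => `|a j - b j|) r_gt0.
rewrite /dT (Mxy_frame h1) (Mxy_frame h2) !expRK (unorm_frame h3).
apply/le_anti/andP; split.
  rewrite ge_max (le_trans (ler_norm _) (h3 j1)) /=.
  by rewrite (le_trans _ (h3 j2)) // distrC ler_norm.
have [ab_ge0|ab_lt0] := lerP 0 (a j3 - b j3).
  by rewrite ger0_norm // le_max h1.
by rewrite ltr0_norm // opprB le_max h2 orbT.
Qed.

Lemma unorm_frameZ t a : (0 < r)%N ->
  unorm A (t *: \sum_i a i *: c i) = `|t| * unorm A (\sum_i a i *: c i).
Proof.
move=> r_gt0; have [j0 a_max] := ord_argmax (fun j => `|a j|) r_gt0.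
rewrite (unorm_frame a_max) scaler_sumr; under eq_bigr do rewrite scalerA.
by rewrite (unorm_frame (j0 := j0)) ?normrM // => j; rewrite !normrM ler_wpM2l.
Qed.

End Frame.

Lemma span_frame_coord (R : realType) (V : vectType R) r (c : 'I_r -> V)
    k (p : 'I_k -> V) x : (forall i, exists j, c j = p i) ->
  x \in <<[seq p i | i <- enum 'I_k]>>%VS -> exists a, x = \sum_j a j *: c j.
Proof.
move=> pc; set X := [tuple c j | j < r] => xp.
have /coord_span -> : x \in <<X>>%VS.
  apply: subvP xp; apply/span_subvP => _ /mapP [i _ ->].
  by have [j <-] := pc i; rewrite -(tnth_mktuple c j) memv_span ?mem_tnth.
by exists (coord X ^~ x); apply: eq_bigr => j _; rewrite -tnth_nth tnth_mktuple.
Qed.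

Section TrivialAlgebra.
Variables (R : realType) (V : vectType R) (A : FRJA R V).
Hypothesis u0 : junit A = 0.

Lemma unorm_unit0 x : unorm A x = 0.
Proof.
rewrite /unorm (_ : [set _ | _ in _] = set0) ?sup0 //.
apply/seteqP; split => // e [l [r [c [lam [[cF _] [i _]]]]] _].
by have /eqP := frame_neq0 i cF; rewrite (unit0_trivial u0 (c i)).
Qed.

(* Junk values: inf [set: R] = 0 and ln 0 = 0. *)
Lemma dT_unit0 x y : dT A x y = 0.
Proof.
suff Mxy0 a b : Mxy A a b = 0 by rewrite /dT !Mxy0 ln0 // maxxx.
rewrite /Mxy (_ : [set _ | _] = setT); last first.
  apply/seteqP; split => // β _; exists 0.
  by rewrite [LHS](unit0_trivial u0) [RHS](unit0_trivial u0).
by apply: inf_out => -[_ [m m_lb]]; have := m_lb (m - 1) I; lra.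
Qed.

End TrivialAlgebra.

Theorem lemma3p1 (R : realType) (V : vectType R) (A : FRJA R V)
    (k : nat) (p : 'I_k -> V) :
  (forall i, jprimitive A (p i)) ->
  (forall i j, i != j -> jorth A (p i) (p j)) ->
  (forall x y : V,
      x \in <<[seq p i | i <- enum 'I_k]>>%VS ->
      y \in <<[seq p i | i <- enum 'I_k]>>%VS ->
      dT A (jexp A x) (jexp A y) = unorm A (x - y)) /\
  (forall x w : V,
      x \in <<[seq p i | i <- enum 'I_k]>>%VS ->
      w \in <<[seq p i | i <- enum 'I_k]>>%VS ->
      unorm A w = 1 ->
      forall s t : R,
        dT A (jexp A (t *: w + x)) (jexp A (s *: w + x)) = `|t - s|).
Proof.
move=> prim orth.
have [u0|nz_u] := eqVneq (junit A) 0.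
  split=> [x y _ _|x w _ _]; rewrite ?dT_unit0 ?unorm_unit0 //.
  by move=> /esym/eqP; rewrite oner_eq0.
have [r [c [cF pc]]] := jordan_frame_extend prim orth.
have r_gt0 := frame_size_gt0 cF nz_u.
have isometry x y : x \in <<[seq p i | i <- enum 'I_k]>>%VS ->
    y \in <<[seq p i | i <- enum 'I_k]>>%VS ->
    dT A (jexp A x) (jexp A y) = unorm A (x - y).
  move=> /(span_frame_coord pc) [a ->] /(span_frame_coord pc) [b ->].
  exact: dT_jexp_frame.
split=> // x w xp wp w1 s t.
rewrite isometry ?memvD ?memvZ // opprD addrACA subrr addr0 -scalerBl.
by have [a wE] := span_frame_coord pc wp; rewrite wE unorm_frameZ // -wE w1 mulr1.
Qed.
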